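(* Let $q$ be a prime power, $0<k<n$, and let $S$ be the set of subspaces $Y\in\mathcal{G}_q(n,k)$ whose Ferrers diagram is the full $k\times(n-k)$ diagram with $k(n-k)$ dots. Let $X\in\mathcal{G}_q(n,k)\setminus S$ with $\mathrm{RE}(X)=(X_n,\dots,X_1)$ and identifying vector $v(X)=(v_n,\dots,v_1)$, and let $\ell$ ($0\le\ell\le n-k-1$) be such that $v_1=\dots=v_\ell=0$ and $v_{\ell+1}=1$. Then the number $\Delta_X$ of subspaces $Y\in S$ with $X<Y$ in the extended-representation order equals \[\Delta_X=\sum_{i=1}^{\ell}\bigl(q^k-1-\{X_i\}\bigr)q^{k(n-k-i)}.\]
   Context: $\mathcal{G}_q(n,k)$ is the set of $k$-dimensional subspaces of $\mathbb{F}_q^n$; field elements are identified with $\mathbb{Z}_q=\{0,\dots,q-1\}$ (with $0\mapsto0,1\mapsto1$). $\mathrm{RE}(X)$ is the unique $k\times n$ reduced row echelon matrix whose rows span $X$, with columns labelled $X_n,\dots,X_1$ from left to right. $v(X)=(v_n,\dots,v_1)$ is binary with $v_i=1$ iff column $X_i$ contains a row's leading one. The Ferrers diagram of $X$ is obtained from $\mathrm{RE}(X)$ by deleting in each row the leading one and everything to its left, deleting columns containing leading ones, right-justifying and replacing entries by dots; it has $k(n-k)$ dots iff $v(X)$ consists of $k$ ones followed by $n-k$ zeros (i.e. $v_n=\dots=v_{n-k+1}=1$). $\mathrm{EXT}(X)$ is the $(k+1)\times n$ matrix with top row $v(X)$ above $\mathrm{RE}(X)$, its $i$-th column being $\binom{v_i}{X_i}$.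 For a $q$-ary column vector $y=(y_1,\dots,y_r)^T$, $\{y\}=\sum_t y_tq^{r-t}$. Order: $X<Y$ if, at the least index $i$ where the $i$-th columns of $\mathrm{EXT}(X)$ and $\mathrm{EXT}(Y)$ differ, $\{\binom{v(X)_i}{X_i}\}<\{\binom{v(Y)_i}{Y_i}\}$. *)

From HB Require Import structures.
From mathcomp Require Import all_boot all_order all_algebra all_field.
Set Implicit Arguments. Unset Strict Implicit. Unset Printing Implicit Defensive.
Import GRing.Theory.

(* Subspaces of F^n are represented (mxalgebra style) by
   their canonical square matrices X : 'M[F]_n with <<X>>%MS = X.
   Columns j : 'I_n of a k x n matrix are indexed 0..n-1 from left to right,
   so column j carries the paper's label X_(n - j). *)

Section Grassmann.
Variables (F : finFieldType) (n k : nat).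
Local Open Scope ring_scope.

Definition lead (M : 'M[F]_(k, n)) (r : 'I_k) (j : 'I_n) : bool :=
  (M r j != 0) && [forall j' : 'I_n, (j' < j)%N ==> (M r j' == 0)].

Definition is_rref (M : 'M[F]_(k, n)) : bool :=
  [forall r : 'I_k, exists j : 'I_n,
     [&& lead M r j, M r j == 1 & [forall r' : 'I_k, (r' != r) ==> (M r' j == 0)]]]
  && [forall r1 : 'I_k, forall r2 : 'I_k, forall j1 : 'I_n, forall j2 : 'I_n,
        [&& (r1 < r2)%N, lead M r1 j1 & lead M r2 j2] ==> (j1 < j2)%N].

Definition RE (X : 'M[F]_n) : 'M[F]_(k, n) :=
  odflt 0 [pick M : 'M[F]_(k, n) | is_rref M && (M == X)%MS].

(* bit v of the identifying vector at column j *)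
Definition vcol (M : 'M[F]_(k, n)) (j : 'I_n) : bool := [exists r, lead M r j].

Definition ferrers_dots (M : 'M[F]_(k, n)) : nat :=
  (\sum_(r < k) #|[set j : 'I_n | [exists j0 : 'I_n, lead M r j0 && (j0 < j)%N]
                                   && ~~ vcol M j]|)%N.

Variable (phi : F -> 'I_#|F|). (* identification of F with Z_q *)

(* {X_j} : q-ary value of column j, first row most significant *)
Definition colval (M : 'M[F]_(k, n)) (j : 'I_n) : nat :=
  (\sum_(r < k) phi (M r j) * #|F| ^ (k.-1 - r))%N.

(* value of the column (v_j ; X_j) of EXT *)
Definition extval (M : 'M[F]_(k, n)) (j : 'I_n) : nat :=
  (vcol M j * #|F| ^ k + colval M j)%N.

Definition ext_col_eq (X Y : 'M[F]_n) (j : 'I_n) : bool :=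
  (vcol (RE X) j == vcol (RE Y) j) && [forall r : 'I_k, RE X r j == RE Y r j].

(* X < Y : at the least label i (= largest column j) where the columns of
   EXT(X), EXT(Y) differ, the value for X is smaller *)
Definition ext_lt (X Y : 'M[F]_n) : bool :=
  [exists j : 'I_n, [&& [forall j' : 'I_n, (j < j')%N ==> ext_col_eq X Y j'],
                       ~~ ext_col_eq X Y j & (extval (RE X) j < extval (RE Y) j)%N]].

Definition in_Grass (X : 'M[F]_n) : bool := (<<X>>%MS == X) && (\rank X == k).

Definition in_S (Y : 'M[F]_n) : bool :=
  in_Grass Y && (ferrers_dots (RE Y) == k * (n - k))%N.

End Grassmann.

From HB Require Import structures.
From mathcomp Require Import all_boot all_order all_algebra all_field.
From mathcomp Require Import zify.
Import GRing.Theory.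
Set Implicit Arguments. Unset Strict Implicit.

(* Every Y in S has RE(Y) = [I_k | A]: an echelon matrix whose Ferrers diagram
   has k(n-k) dots must have its pivots in the first k columns.  Hence
   Y |-> RE(Y) is a bijection from S onto the matrices [I_k | A].  Since v(X)
   has a one at label l+1 whereas v(Y) vanishes at every label <= n-k, the
   first label i where EXT(X) and EXT(Y) differ is at most l; there
   v_i(X) = v_i(Y) = 0, so X < Y says that Y_t = X_t for t < i and
   {Y_i} > {X_i}.  For a fixed i this leaves q^k - 1 - {X_i} values for Y_i
   and q^k free values for each of the n-k-i columns of labels i+1, ..., n-k. *)

Lemma count_iota_interval n a b :
  count (fun j => a <= j < b) (iota 0 n) = minn b n - a.
Proof.
elim: n => [|n IHn]; first by rewrite /=; lia.
by rewrite -addn1 iotaD count_cat IHn /=; lia.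
Qed.

Lemma card_ord_interval n a b : b <= n -> #|[set j : 'I_n | a <= j < b]| = b - a.
Proof.
move=> bn; rewrite -sum1_card (eq_bigl (fun j : 'I_n => a <= j < b)) => [|j].
  by rewrite -(big_mkord (fun j => a <= j < b) (fun=> 1)) sum1_count /index_iota subn0
             count_iota_interval; lia.
by rewrite inE.
Qed.

Lemma prod_ord_interval n a b c : b <= n ->
  \prod_(i < n | a <= i < b) c = c ^ (b - a).
Proof.
move=> bn; rewrite prod_nat_const -(card_ord_interval a bn).
by congr (_ ^ _); apply: eq_card => i; rewrite inE.
Qed.

Lemma card_inj_gt (T : finType) m (h : T -> 'I_m) v :
  injective h -> #|T| = m -> #|[set x | v < h x]| = m - v.+1.
Proof.
move=> h_inj cardT; rewrite -(card_imset _ h_inj) -(card_ord_interval v.+1 (leqnn m)).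
apply: eq_card => i; rewrite inE ltn_ord andbT.
have /codomP [x ->] : i \in codom h.
  by apply: inj_card_onto; rewrite ?card_ord ?cardT.
by rewrite mem_imset // inE.
Qed.

Lemma card_exists_uniq (I T : finType) (D : pred I) (P : I -> pred T) :
  (forall i j x, P i x -> P j x -> i = j) ->
  #|[set x | [exists (i | D i), P i x]]| = \sum_(i | D i) #|[set x | P i x]|.
Proof.
move=> P_uniq; rewrite -sum1_card.
under [RHS]eq_bigr do rewrite -sum1_card.
rewrite (exchange_big_dep xpredT) //= [LHS]big_mkcond; apply: eq_bigr => x _.
rewrite inE; case: existsP => [[i /andP[Di Pix]] | no_i].
  rewrite (bigD1 i) ?Di ?inE //= big1 // => j /andP[/andP[_]]; rewrite inE => Pjx.
  by rewrite (P_uniq _ _ _ Pjx Pix) eqxx.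
by rewrite big1 // => i /andP[Di]; rewrite inE => Pix; case: no_i; exists i; rewrite Di.
Qed.

Lemma sum_eq_bound k (a : 'I_k -> nat) c :
  (forall r, a r <= c) -> \sum_(r < k) a r = k * c -> forall r, a r = c.
Proof.
move=> a_le sum_a r.
have : \sum_(r < k) (c - a r) == 0 by rewrite sumnB // sum_a sum_nat_const card_ord subnn.
by rewrite sum_nat_eq0 => /forallP /(_ r) /=; have := a_le r; lia.
Qed.

Lemma incr_bounded_ord_id k (f : 'I_k -> nat) :
  (forall i j : 'I_k, i < j -> f i < f j) -> (forall i, f i < k) -> forall i, f i = i.
Proof.
move=> f_incr f_lt i.
have f_gap d (i' j : 'I_k) : j = i' + d :> nat -> f i' + d <= f j.
  elim: d j => [|d IHd] j ji'.
    by rewrite addn0 (_ : j = i') //; apply: val_inj; rewrite /= ji' addn0.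
  have lt_id : i' + d < k by have := ltn_ord j; lia.
  have := IHd (Ordinal lt_id) erefl; have := f_incr (Ordinal lt_id) j; rewrite /=; lia.
have k_gt0 : 0 < k by have := ltn_ord i; lia.
have k_pred : k.-1 < k by lia.
have := f_gap i (Ordinal k_gt0) i erefl; have := f_lt (Ordinal k_pred).
have := f_gap (k.-1 - i) i (Ordinal k_pred); have := ltn_ord i; rewrite /=; lia.
Qed.

Lemma digits_recl q k (d : 'I_k.+1 -> nat) :
  \sum_(i < k.+1) d i * q ^ i = d ord0 + q * \sum_(i < k) d (lift ord0 i) * q ^ i.
Proof.
rewrite big_ord_recl /= expn0 muln1 big_distrr /=; congr (_ + _).
by apply: eq_bigr => i _; rewrite /bump leq0n /= add1n expnS; lia.
Qed.

Lemma digits_lt q k (d : 'I_k -> nat) :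
  (forall i, d i < q) -> \sum_(i < k) d i * q ^ i < q ^ k.
Proof.
elim: k d => [|k IHk] d d_lt; first by rewrite big_ord0 expn0.
rewrite digits_recl expnS.
have := IHk _ (fun i => d_lt (lift ord0 i)); have := d_lt ord0; nia.
Qed.

Lemma digits_inj q k (d d' : 'I_k -> nat) : 0 < q ->
  (forall i, d i < q) -> (forall i, d' i < q) ->
  \sum_(i < k) d i * q ^ i = \sum_(i < k) d' i * q ^ i -> d =1 d'.
Proof.
move=> q_gt0; elim: k d d' => [|k IHk] d d' d_lt d'_lt; first by move=> _ [].
rewrite !digits_recl => eq_sum.
have eq0 : d ord0 = d' ord0.
  have := congr1 (modn^~ q) eq_sum.
  by rewrite (addnC (d _)) (addnC (d' _)) !(mulnC q) !modnMDl !modn_small.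
move: eq_sum; rewrite eq0 => /addnI /eqP; rewrite eqn_pmul2l // => /eqP eq_tail i.
case: (unliftP ord0 i) => [j ->|->] //.
exact: (IHk _ _ (fun j => d_lt _) (fun j => d'_lt _) eq_tail).
Qed.

Section DigitValue.
Variables (F : finFieldType) (k : nat) (phi : F -> 'I_#|F|).
Hypothesis phi_bij : bijective phi.

Definition digval (c : {ffun 'I_k -> F}) : nat :=
  \sum_(r < k) phi (c r) * #|F| ^ (k.-1 - r).

Lemma digval_rev c : digval c = \sum_(i < k) phi (c (rev_ord i)) * #|F| ^ i.
Proof.
rewrite /digval (reindex_inj rev_ord_inj); apply: eq_bigr => i _ /=.
by rewrite (_ : k.-1 - (k - i.+1) = i) //; have := ltn_ord i; lia.
Qed.

Lemma digval_lt c : digval c < #|F| ^ k.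
Proof. by rewrite digval_rev; apply: digits_lt => i; apply: ltn_ord. Qed.

Lemma digval_inj : injective digval.
Proof.
have q_gt0 : 0 < #|F| by apply/card_gt0P; exists 0%R.
move=> c c'; rewrite !digval_rev.
move=> /(digits_inj q_gt0 (fun _ => ltn_ord _) (fun _ => ltn_ord _)) eq_digits.
apply/ffunP => r; rewrite -(rev_ordK r); apply: (bij_inj phi_bij); apply: val_inj.
exact: eq_digits.
Qed.

Lemma card_digval_gt v : #|[set c | v < digval c]| = #|F| ^ k - v.+1.
Proof.
have := @card_inj_gt _ _ (fun c => Ordinal (digval_lt c)) v.
by apply=> [c c' /(congr1 val) /digval_inj | ]; rewrite // card_ffun card_ord.
Qed.

End DigitValue.

Section Echelon.
Variables (F : finFieldType) (n k : nat).
Local Open Scope ring_scope.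
Implicit Types (M N : 'M[F]_(k, n)).

Definition std_form M :=
  [forall r : 'I_k, forall j : 'I_n, (j < k)%N ==> (M r j == (r == j :> nat)%:R)].

Lemma std_formP M :
  reflect (forall r (j : 'I_n), (j < k)%N -> M r j = (r == j :> nat)%:R) (std_form M).
Proof.
apply: (iffP forallP) => [M_std r j jk | M_std r].
  by move/forallP/(_ j)/implyP/(_ jk)/eqP: (M_std r).
by apply/forallP => j; apply/implyP => jk; rewrite M_std.
Qed.

Lemma lead_leq M r j j' : lead M r j -> M r j' != 0 -> (j <= j')%N.
Proof.
case/andP=> _ /forallP left0 nz; rewrite leqNgt; apply: contraNN nz => lt.
by move/implyP: (left0 j'); apply.
Qed.

Lemma lead_uniq M r j j' : lead M r j -> lead M r j' -> j = j'.
Proof.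
move=> lj lj'; apply: val_inj; apply/eqP; rewrite eqn_leq.
by rewrite (lead_leq lj (proj1 (andP lj'))) (lead_leq lj' (proj1 (andP lj))).
Qed.

Definition pivot_at M r j :=
  [&& lead M r j, M r j == 1 & [forall r' : 'I_k, (r' != r) ==> (M r' j == 0)]].

Definition pivot M (j0 : 'I_n) r := odflt j0 [pick j | pivot_at M r j].

Section Rref.
Variables (M : 'M[F]_(k, n)) (j0 : 'I_n).
Hypothesis M_rref : is_rref M.

Lemma pivot_spec r : pivot_at M r (pivot M j0 r).
Proof.
case/andP: M_rref => /forallP /(_ r) /existsP [j Mrj] _.
by rewrite /pivot; case: pickP => [//|/(_ j)]; rewrite /pivot_at Mrj.
Qed.

Lemma pivot_lead r : lead M r (pivot M j0 r).
Proof. by case/andP: (pivot_spec r). Qed.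

Lemma lead_pivot r j : lead M r j -> j = pivot M j0 r.
Proof. by move/lead_uniq; apply; apply: pivot_lead. Qed.

Lemma pivot_ltn (r1 r2 : 'I_k) : (r1 < r2)%N -> (pivot M j0 r1 < pivot M j0 r2)%N.
Proof.
move=> lt12; case/andP: M_rref => _ /forallP /(_ r1) /forallP /(_ r2).
move=> /forallP /(_ (pivot M j0 r1)) /forallP /(_ (pivot M j0 r2)) /implyP; apply.
by rewrite lt12 !pivot_lead.
Qed.

Lemma pivot_inj : injective (pivot M j0).
Proof.
move=> r1 r2 eq12; apply: val_inj; case: (ltngtP r1 r2) => [/pivot_ltn | /pivot_ltn | //].
  by rewrite eq12 ltnn.
by rewrite eq12 ltnn.
Qed.

Lemma rref_std_form : (forall r, pivot M j0 r < k)%N -> std_form M.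
Proof.
move=> pivot_lt; apply/std_formP => r j jk.
have pivot_id := incr_bounded_ord_id (@pivot_ltn) pivot_lt.
have -> : j = pivot M j0 (Ordinal jk) by apply: val_inj; rewrite /= pivot_id.
case/and3P: (pivot_spec (Ordinal jk)) => _ /eqP pivot1 /forallP /(_ r) /implyP zero_off.
case: (eqVneq r (Ordinal jk)) => [-> | ne]; first by rewrite pivot1 pivot_id eqxx.
by rewrite (eqP (zero_off ne)) pivot_id; move: ne; rewrite -val_eqE => /negbTE ->.
Qed.

Definition row_dots r :=
  #|[set j : 'I_n | [exists j', lead M r j' && (j' < j)%N] && ~~ vcol M j]|.

Lemma ferrers_dotsE : ferrers_dots M = (\sum_(r < k) row_dots r)%N.
Proof. by []. Qed.

Lemma row_dots_leq r : (k <= n)%N -> (row_dots r <= n - k)%N.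
Proof.
move=> kn; set V := [set j | vcol M j].
have V_ge : (k <= #|V|)%N.
  rewrite -[k in (k <= _)%N]card_ord -(card_imset _ pivot_inj) subset_leq_card //.
  apply/subsetP => _ /imsetP [r' _ ->]; rewrite inE; apply/existsP.
  by exists r'; apply: pivot_lead.
apply: (@leq_trans #|~: V|).
  by apply: subset_leq_card; apply/subsetP => j; rewrite !inE => /andP[_ ->].
by have := cardsC V; rewrite card_ord; lia.
Qed.

Lemma row_dots_pivot r : (row_dots r <= n - (pivot M j0 r).+1)%N.
Proof.
rewrite -(@card_ord_interval n _ n) //; apply: subset_leq_card; apply/subsetP => j.
rewrite !inE ltn_ord andbT => /andP[/existsP [j' /andP[lj' lt]] _].
by rewrite -(lead_pivot lj').
Qed.

Lemma full_dots_std_form :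
  (0 < k <= n)%N -> ferrers_dots M = (k * (n - k))%N -> std_form M.
Proof.
case/andP=> k_gt0 kn full; apply: rref_std_form.
have dots_eq := sum_eq_bound (fun r => row_dots_leq r kn) full.
have last_lt : (k.-1 < k)%N by rewrite prednK.
have last_pivot_lt : (pivot M j0 (Ordinal last_lt) < k)%N.
  have := row_dots_pivot (Ordinal last_lt); rewrite dots_eq.
  by have := ltn_ord (pivot M j0 (Ordinal last_lt)); lia.
move=> r; case: (ltngtP r k.-1) => [lt | gt | eq].
- exact: ltn_trans (pivot_ltn (r2 := Ordinal last_lt) lt) last_pivot_lt.
- by have := ltn_ord r; lia.
- by rewrite (_ : r = Ordinal last_lt) //; apply: val_inj.
Qed.

End Rref.
End Echelon.

Section StdForm.
Variables (F : finFieldType) (n k : nat).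
Hypothesis kn : (k <= n)%N.
Local Open Scope ring_scope.
Implicit Types (M N : 'M[F]_(k, n)).

Section StdFormMatrix.
Variable M : 'M[F]_(k, n).
Hypothesis M_std : std_form M.

Let M_id r (j : 'I_n) : (j < k)%N -> M r j = (r == j :> nat)%:R :=
  std_formP M M_std r j.

Lemma std_form_lead r j : lead M r j = (j == r :> nat).
Proof.
case: (ltngtP j r) => [jr | rj | jr].
- by rewrite /lead M_id ?(ltn_trans jr) // gtn_eqF // eqxx.
- apply/negbTE/negP => /andP[_ /forallP /(_ (widen_ord kn r)) /implyP /(_ rj)].
  by rewrite M_id //= eqxx oner_eq0.
- have jk : (j < k)%N by rewrite jr.
  rewrite /lead M_id // jr eqxx oner_eq0 /=; apply/forallP => j'; apply/implyP => lt.
  by rewrite M_id ?(ltn_trans lt) // gtn_eqF // -jr.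
Qed.

Lemma std_form_vcol j : vcol M j = (j < k)%N.
Proof.
apply/existsP/idP => [[r] | jk]; first by rewrite std_form_lead => /eqP ->.
by exists (Ordinal jk); rewrite std_form_lead.
Qed.

Lemma std_form_rref : is_rref M.
Proof.
apply/andP; split.
  apply/forallP => r; apply/existsP; exists (widen_ord kn r).
  rewrite std_form_lead /= eqxx M_id //= eqxx eqxx /=.
  apply/forallP => r'; apply/implyP => ne; rewrite M_id //=.
  by move: ne; rewrite -val_eqE => /negbTE ->.
apply/forallP => r1; apply/forallP => r2; apply/forallP => j1; apply/forallP => j2.
by apply/implyP; rewrite !std_form_lead => /and3P [lt /eqP -> /eqP ->].
Qed.

Lemma std_form_dots : ferrers_dots M = (k * (n - k))%N.
Proof.
rewrite ferrers_dotsE (eq_bigr (fun=> n - k)%N) ?sum_nat_const ?card_ord // => r _.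
rewrite -(card_ord_interval k (leqnn n)); apply: eq_card => j; rewrite !inE.
rewrite std_form_vcol -leqNgt ltn_ord andbT andbC; case: leqP => //= kj.
by apply/existsP; exists (widen_ord kn r); rewrite std_form_lead /= eqxx (leq_trans _ kj).
Qed.

Lemma std_form_rank : \rank M = k.
Proof.
apply/eqP; rewrite eqn_leq rank_leq_row /=.
pose E : 'M[F]_(n, k) := \matrix_(j, r) (j == r :> nat)%:R.
have ME : M *m E = 1%:M.
  apply/matrixP => r r'; rewrite !mxE (bigD1 (widen_ord kn r')) //= big1 ?addr0.
    by rewrite mxE M_id //= eqxx mulr1.
  move=> j ne; rewrite mxE; case: eqP => [eq_jr' | _]; last by rewrite mulr0.
  by case/eqP: ne; apply: val_inj.
by rewrite -[k in (k <= _)%N](mxrank1 F k) -ME mxrankM_maxl.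
Qed.

Lemma mul_std_form (C : 'M[F]_k) r r' : (C *m M) r (widen_ord kn r') = C r r'.
Proof.
rewrite !mxE (bigD1 r') //= big1 ?addr0; first by rewrite M_id //= eqxx mulr1.
by move=> r'' ne; rewrite M_id //=; move: ne; rewrite -val_eqE => /negbTE ->; rewrite mulr0.
Qed.

Lemma rref_eqmx_std_form N : is_rref N -> (N == M)%MS -> N = M.
Proof.
move=> N_rref /eqmxP eqNM.
have /submxP [C defN] : (N <= M)%MS by rewrite eqNM.
have pivot_lt j0 r : (pivot N j0 r < k)%N.
  have [r' Crr'] : exists r', C r r' != 0.
    apply/existsP; apply: contraT; rewrite negb_exists => /forallP C0.
    have := pivot_lead j0 N_rref r; case/andP; rewrite defN mxE big1 ?eqxx //.
    by move=> r' _; move: (C0 r'); rewrite negbK => /eqP ->; rewrite mul0r.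
  have := lead_leq (pivot_lead j0 N_rref r) (_ : N r (widen_ord kn r') != 0).
  rewrite defN mul_std_form => /(_ Crr') le; exact: leq_ltn_trans le (ltn_ord r').
have N_std j0 := rref_std_form N_rref (pivot_lt j0).
rewrite defN; suff -> : C = 1%:M by rewrite mul1mx.
apply/matrixP => r r'; rewrite -mul_std_form -defN.
by rewrite (std_formP _ (N_std (widen_ord kn r'))) //= !mxE.
Qed.

End StdFormMatrix.

Lemma RE_genmx_std_form M : std_form M -> RE k <<M>>%MS = M.
Proof.
move=> M_std; rewrite /RE; case: pickP => [N /andP[N_rref eqN] | /(_ M)].
  apply: rref_eqmx_std_form => //; apply/eqmxP.
  exact: eqmx_trans (eqmxP eqN) (genmxE M).
by rewrite std_form_rref //= => /negbT /negP[]; apply/eqmxP; apply: eqmx_sym (genmxE M).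
Qed.

Lemma std_form_in_S M : std_form M -> in_S k <<M>>%MS.
Proof.
move=> M_std; rewrite /in_S /in_Grass genmx_id mxrank_gen std_form_rank //.
by rewrite RE_genmx_std_form // std_form_dots // !eqxx.
Qed.

End StdForm.

Lemma in_S_std_form (F : finFieldType) n k (Y : 'M[F]_n) : 0 < k -> k < n ->
  in_S k Y -> std_form (RE k Y) /\ (RE k Y == Y)%MS.
Proof.
move=> k_gt0 kn; case/andP => _ /eqP; rewrite /RE.
case: pickP => [N /andP[N_rref eqN] dots | _].
  split=> //; apply: (full_dots_std_form (Ordinal (ltn_trans k_gt0 kn)) N_rref) => //.
  by rewrite k_gt0 ltnW.
suff -> : ferrers_dots (0%R : 'M[F]_(k, n)) = 0 by move/esym/eqP; rewrite muln_eq0; lia.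
rewrite ferrers_dotsE big1 // => r _; apply/eqP; rewrite cards_eq0; apply/eqP/setP => j.
rewrite !inE; apply/negbTE; rewrite negb_and negb_exists; apply/orP; left.
by apply/forallP => j0; rewrite /lead mxE eqxx.
Qed.

Section Count.
Variables (F : finFieldType) (n k : nat) (phi : F -> 'I_#|F|).
Hypothesis phi_bij : bijective phi.
Hypotheses (k_gt0 : 0 < k) (kn : k < n).
Variables (R : 'M[F]_(k, n)) (l : nat).
Hypothesis l_le : l <= n - k - 1.
Hypothesis R_v0 : forall j : 'I_n, 1 <= n - j <= l -> ~~ vcol R j.
Hypothesis R_v1 : forall j : 'I_n, n - j = l.+1 -> vcol R j.

Local Notation q := #|F|.
Implicit Types (M : 'M[F]_(k, n)) (j : 'I_n).

Definition colf M j : {ffun 'I_k -> F} := [ffun r => M r j].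

Lemma colval_digval M j : colval phi M j = digval phi (colf M j).
Proof. by apply: eq_bigr => r _; rewrite ffunE. Qed.

Lemma colval_lt M j : colval phi M j < q ^ k.
Proof. by rewrite colval_digval digval_lt. Qed.

Lemma ext_col_eqE (X Y : 'M[F]_n) j : ext_col_eq k X Y j =
  (vcol (RE k X) j == vcol (RE k Y) j) && (colf (RE k X) j == colf (RE k Y) j).
Proof.
rewrite /ext_col_eq; congr (_ && _); apply/forallP/eqP => [eq_col | eq_col r].
  by apply/ffunP => r; rewrite !ffunE; apply/eqP.
by have := congr1 (fun c : {ffun 'I_k -> F} => c r) eq_col; rewrite !ffunE => ->.
Qed.

Definition exceeds_at j M :=
  [forall j' : 'I_n, (j < j') ==> (colf M j' == colf R j')]
  && (colval phi R j < colval phi M j).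

Lemma vcol_R_low j : n - l <= j -> vcol R j = false.
Proof. by move=> jl; apply/negbTE/R_v0; have := ltn_ord j; lia. Qed.

Lemma vcol_std_form_low M j : std_form M -> n - l <= j -> vcol M j = false.
Proof. by move=> M_std jl; rewrite std_form_vcol ?(ltnW kn) //; lia. Qed.

Lemma first_diff_low M j : std_form M ->
  (forall j', j < j' -> vcol R j' = vcol M j') -> extval phi R j < extval phi M j ->
  n - l <= j.
Proof.
move=> M_std vcol_eq lt_ext; rewrite leqNgt; apply/negP => j_lt.
have jl1_lt : n - l - 1 < n by lia.
pose jl1 := Ordinal jl1_lt.
have vR : vcol R jl1 by apply: R_v1 => /=; lia.
have vM : vcol M jl1 = false by rewrite std_form_vcol ?(ltnW kn) //=; lia.
case: (ltngtP j jl1) => [lt | gt | eq]; [| by move: gt => /=; lia |].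
  by move: (vcol_eq _ lt); rewrite vR vM.
move: lt_ext; rewrite (_ : j = jl1); last by apply: val_inj.
by rewrite /extval vR vM mul1n mul0n add0n; have := colval_lt M jl1; lia.
Qed.

Lemma ext_lt_std_formE (X Y : 'M[F]_n) : RE k X = R -> std_form (RE k Y) ->
  ext_lt k phi X Y = [exists (j : 'I_n | n - l <= j), exceeds_at j (RE k Y)].
Proof.
rewrite /ext_lt => eX M_std; rewrite eX; set M := RE k Y.
have vcol_low (j : 'I_n) : n - l <= j -> vcol R j = vcol M j.
  by move=> jl; rewrite vcol_R_low ?vcol_std_form_low.
have ext_low (j : 'I_n) : n - l <= j ->
    (extval phi R j < extval phi M j) = (colval phi R j < colval phi M j).
  by move=> jl; rewrite /extval -vcol_low // vcol_R_low.
apply/existsP/existsP => [[j /and3P[/forallP after _ lt]] | [j /andP[jl /andP[/forallP after lt]]]].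
  have jl : n - l <= j.
    apply: first_diff_low M_std _ lt => j' jj'.
    by move/implyP: (after j') => /(_ jj'); rewrite ext_col_eqE eX => /andP[/eqP-> _].
  exists j; rewrite jl /exceeds_at -ext_low // lt andbT.
  apply/forallP => j'; apply/implyP => jj'.
  by move/implyP: (after j') => /(_ jj'); rewrite ext_col_eqE eX => /andP[_]; rewrite eq_sym.
exists j; apply/and3P; split.
- apply/forallP => j'; apply/implyP => jj'.
  move/implyP: (after j') => /(_ jj').
  by rewrite ext_col_eqE eX vcol_low ?eqxx 1?eq_sym //; lia.
- rewrite ext_col_eqE eX negb_and; apply/orP; right; apply: contraTneq lt => eq_col.
  by rewrite !colval_digval eq_col ltnn.
- by rewrite ext_low.
Qed.

Lemma card_S_gt (X : 'M[F]_n) : RE k X = R ->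
  #|[set Y | in_S k Y && ext_lt k phi X Y]|
  = #|[set M | [exists (j : 'I_n | n - l <= j), std_form M && exceeds_at j M]]|.
Proof.
move=> eX; set S := [set M : 'M[F]_(k, n) | _].
have S_std M : M \in S -> std_form M by rewrite inE => /existsP [j /and3P[_ ->]].
have genmx_inj : {in S &, injective (fun M => <<M>>%MS)}.
  move=> M1 M2 /S_std std1 /S_std std2 eq12.
  by rewrite -(RE_genmx_std_form (ltnW kn) std1) -(RE_genmx_std_form (ltnW kn) std2) eq12.
have memS M : std_form M -> (M \in S) = [exists (j : 'I_n | n - l <= j), exceeds_at j M].
  by move=> M_std; rewrite inE; apply: eq_existsb => j; rewrite M_std.
rewrite -(card_in_imset genmx_inj); apply: eq_card => Y; rewrite inE.
apply/andP/imsetP => [[Y_S lt_XY] | [M M_S ->]].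
  have [Y_std eqY] := in_S_std_form k_gt0 kn Y_S.
  exists (RE k Y); first by rewrite memS // -(ext_lt_std_formE eX).
  by case/andP: Y_S => /andP[/eqP genY _] _; rewrite -{1}genY (genmxP eqY).
have M_std := S_std M M_S; split; first by apply: std_form_in_S M_std; apply: ltnW.
by rewrite ext_lt_std_formE // ?RE_genmx_std_form // -?memS //; apply: ltnW.
Qed.

Lemma exceeds_at_uniq M j1 j2 : exceeds_at j1 M -> exceeds_at j2 M -> j1 = j2.
Proof.
wlog lt12 : j1 j2 / j1 < j2 => [wlog_lt | ].
  case: (ltngtP j1 j2) => [lt | gt | eq] e1 e2; last exact: val_inj.
    exact: wlog_lt lt e1 e2.
  exact/esym/(wlog_lt _ _ gt e2 e1).
case/andP=> /forallP /(_ j2) /implyP /(_ lt12) /eqP eq_col _ /andP[_].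
by rewrite !colval_digval eq_col ltnn.
Qed.

Section FixedColumn.
Variable j : 'I_n.
Hypothesis jl : n - l <= j.

Definition unit_col (j' : 'I_n) : {ffun 'I_k -> F} :=
  [ffun r : 'I_k => (r == j' :> nat)%:R%R].

Definition col_choices (j' : 'I_n) : {set {ffun 'I_k -> F}} :=
  if k <= j' < j then setT
  else if j' == j then [set c | colval phi R j < digval phi c]
  else [set if j' < k then unit_col j' else colf R j'].

Lemma card_col_choices j' : #|col_choices j'| =
  if k <= j' < j then q ^ k else if j' == j then q ^ k - 1 - colval phi R j else 1.
Proof.
rewrite /col_choices; case: ifP => _; first by rewrite cardsT card_ffun card_ord.
case: ifP => _; last exact: cards1.
by rewrite card_digval_gt // -subnDA add1n.
Qed.

Lemma std_form_exceeds_atE M :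
  std_form M && exceeds_at j M = [forall j', colf M j' \in col_choices j'].
Proof.
have kj : k < j by lia.
apply/andP/forallP => [[/std_formP M_std /andP[/forallP after lt]] j' | in_choices].
  rewrite /col_choices; case: ifP => [_ | not_free]; first exact: in_setT.
  case: eqP => [-> | ne]; first by rewrite inE -colval_digval.
  rewrite inE; case: ifP => j'k.
    by apply/eqP/ffunP => r; rewrite !ffunE M_std.
  move/implyP: (after j'); apply; rewrite ltn_neqAle; apply/andP; split.
    by apply/eqP => /val_inj /esym.
  by move: not_free j'k; lia.
split.
  apply/std_formP => r j' j'k; move: (in_choices j'); rewrite /col_choices.
  have -> : (k <= j' < j) = false by lia.
  have -> : (j' == j) = false by apply/negbTE/eqP => /(congr1 val) /=; lia.
  by rewrite j'k inE => /eqP /(congr1 (fun c : {ffun 'I_k -> F} => c r)); rewrite !ffunE.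
apply/andP; split.
  apply/forallP => j'; apply/implyP => jj'; move: (in_choices j'); rewrite /col_choices.
  have -> : (k <= j' < j) = false by lia.
  have -> : (j' == j) = false by apply/negbTE/eqP => /(congr1 val) /=; lia.
  have -> : (j' < k) = false by lia.
  by rewrite inE.
by move: (in_choices j); rewrite /col_choices ltnn andbF eqxx inE -colval_digval.
Qed.

Lemma card_exceeds_at : #|[set M | std_form M && exceeds_at j M]|
  = (q ^ k - 1 - colval phi R j) * q ^ (k * (j - k)).
Proof.
pose cols M : {ffun 'I_n -> {ffun 'I_k -> F}} := [ffun j' => colf M j'].
have cols_inj : injective cols.
  move=> M1 M2 eq12; apply/matrixP => r j'.
  by have := congr1 (fun f : {ffun 'I_n -> {ffun 'I_k -> F}} => f j' r) eq12; rewrite !ffunE.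
rewrite -(card_imset _ cols_inj).
have -> : #|cols @: [set M | std_form M && exceeds_at j M]| = #|family col_choices|.
  apply: eq_card => f; apply/imsetP/familyP => [[M] | f_in].
    by rewrite inE std_form_exceeds_atE => /forallP M_in -> j'; rewrite ffunE.
  exists (\matrix_(r, j') f j' r)%R.
    rewrite inE std_form_exceeds_atE; apply/forallP => j'.
    by rewrite (_ : colf _ j' = f j') //; apply/ffunP => r; rewrite ffunE mxE.
  by apply/ffunP => j'; apply/ffunP => r; rewrite !ffunE mxE.
rewrite card_family foldrE big_map big_enum /=.
rewrite (eq_bigr _ (fun j' _ => card_col_choices j')).
rewrite (bigD1 j) //= ltnn andbF eqxx expnM; congr (_ * _).
rewrite -(@prod_ord_interval n k j) ?(ltnW (ltn_ord j)) //.
rewrite [RHS]big_mkcond [LHS]big_mkcond.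
by apply: eq_bigr => j' _; case: eqP => [-> | _]; rewrite ?ltnn ?andbF.
Qed.

End FixedColumn.

Lemma card_S_gt_sum (X : 'M[F]_n) : RE k X = R ->
  #|[set Y | in_S k Y && ext_lt k phi X Y]|
  = \sum_(j : 'I_n | n - l <= j) (q ^ k - 1 - colval phi R j) * q ^ (k * (j - k)).
Proof.
move=> eX; rewrite card_S_gt // card_exists_uniq => [|j1 j2 M /andP[_ e1] /andP[_ e2]].
  by apply: eq_bigr => j jl; rewrite card_exceeds_at.
exact: exceeds_at_uniq e1 e2.
Qed.

End Count.

Theorem lemma6 (F : finFieldType) (n k : nat) (phi : F -> 'I_#|F|)
  (phi_bij : bijective phi)
  (phi0 : nat_of_ord (phi 0%R) = 0) (phi1 : nat_of_ord (phi 1%R) = 1)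
  (hk0 : 0 < k) (hkn : k < n)
  (X : 'M[F]_n) (hX : in_Grass k X) (hXS : ~~ in_S k X)
  (l : nat) (hl : l <= n - k - 1)
  (hv0 : forall j : 'I_n, 1 <= n - j <= l -> ~~ vcol (RE k X) j)
  (hv1 : forall j : 'I_n, n - j = l.+1 -> vcol (RE k X) j) :
  #|[set Y : 'M[F]_n | in_S k Y && ext_lt k phi X Y]|
  = \sum_(j : 'I_n | 1 <= n - j <= l)
       (#|F| ^ k - 1 - colval phi (RE k X) j) * #|F| ^ (k * (n - k - (n - j))).
Proof.
rewrite (card_S_gt_sum phi_bij hk0 hkn hl hv0 hv1 (erefl (RE k X))).
apply: eq_big => [j | j _]; have := ltn_ord j.
  by move=> lt_jn; apply/idP/idP; lia.
by move=> lt_jn; rewrite (_ : n - k - (n - j) = j - k) //; lia.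
Qed.
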